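(* Under the standing setup below, let $y\in\mathbb Y$ be such that $\mathbf Ax=y$ is solvable in $\operatorname{dom}(\mathcal{Q})$. Let $(\delta_n)_{n\in\mathbb N}\subseteq(0,\infty)$ with $\delta_n\to0$, and let $(y_n)_{n\in\mathbb N}\subseteq\mathbb Y$ satisfy $\|y-y_n\|\le\delta_n$. Write $\mathcal{R}_n:=\mathcal{R}_{\delta_n}$ and $\boldsymbol\Phi_n:=\boldsymbol\Phi_{\theta(\delta_n)}$, and choose $x_n\in\operatorname{argmin}\{\mathcal{R}_n(z)\mid \|\mathbf Az-y_n\|\le\delta_n\}$. Then: (i) $(x_n)_{n\in\mathbb N}$ has at least one weak accumulation point; (ii) the weak limit $x^+$ of every weakly convergent subsequence $(x_{n(k)})_{k\in\mathbb N}$ is an $\mathcal{R}$-minimizing solution of $\mathbf Ax=y$, and $\mathcal{R}_{n(k)}(x_{n(k)})\to\mathcal{R}(x^+)$ as $k\to\infty$; (iii) if the $\mathcal{R}$-minimizing solution $x^+$ of $\mathbf Ax=y$ is unique, then $x_n\rightharpoonup x^+$ weakly and $\mathcal{R}_n(x_n)\to\mathcal{R}(x^+)$ as $n\to\infty$.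
   Context: Standing setup: $\mathbb X,\mathbb Y$ are real Hilbert spaces and $\mathbf A\colon\mathbb X\to\mathbb Y$ is a bounded linear operator (possibly with non-trivial kernel). Fix $\lambda>0$. Let $\boldsymbol\Phi\colon\mathbb X\to\mathbb X$ and, for each $\delta>0$, $\boldsymbol\Phi_{\theta(\delta)}\colon\mathbb X\to\mathbb X$ be maps (neural networks), and let $\mathcal{Q}\colon\mathbb X\to[0,\infty]$. Define $\mathcal{R}_\delta(x)=\tfrac12\|\boldsymbol\Phi_{\theta(\delta)}(x)-x\|^2+\lambda\mathcal{Q}(x)$ and $\mathcal{R}(x)=\tfrac12\|\boldsymbol\Phi(x)-x\|^2+\lambda\mathcal{Q}(x)$. Standing assumptions: (A1) $\boldsymbol\Phi$ and all $\boldsymbol\Phi_{\theta(\delta)}$ are weakly (sequentially) continuous; (A2) $\boldsymbol\Phi_{\theta(\delta)}\to\boldsymbol\Phi$ weakly uniformly on bounded sets as $\delta\to0$, meaning that for every bounded $B\subseteq\mathbb X$ and every $h\in\mathbb X$, $\sup_{x\in B}|\langle\boldsymbol\Phi_{\theta(\delta)}(x)-\boldsymbol\Phi(x),h\rangle|\to0$ as $\delta\to0$; (A3) $\boldsymbol\Phi_{\theta(\delta)}(x)\to\boldsymbol\Phi(x)$ in norm as $\delta\to0$ for every $\mathcal{R}$-minimizing solution $x$ of $\mathbf Ax=y$; (A4) $\mathcal{Q}$ is proper, coercive and weakly lower semicontinuous. An $\mathcal{R}$-minimizing solution of $\mathbf Ax=y$ is any element of $\operatorname{argmin}\{\mathcal{R}(x)\mid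 \mathbf Ax=y\}$. *)

From HB Require Import structures.
From mathcomp Require Import all_boot all_order all_algebra.
From mathcomp Require Import all_classical all_reals all_analysis.
Set Implicit Arguments. Unset Strict Implicit. Unset Printing Implicit Defensive.
Import Order.TTheory GRing.Theory Num.Theory.
Import numFieldNormedType.Exports.
Local Open Scope classical_set_scope.
Local Open Scope ring_scope.

(* A real inner product on a normed space, inducing its norm.
   A real Hilbert space is a complete normed space (completeNormedModType R)
   equipped with such an inner product. *)
Record inner_product (R : realType) (V : normedModType R) := InnerProduct {
  ip :> V -> V -> R;
  ip_sym : forall x y, ip x y = ip y x;
  ip_linear_l : forall (a : R) (x y z : V), ip (a *: x + y) z = a * ip x z + ip y z;
  ip_norm : forall x, ip x x = `|x| ^+ 2
}.

Section Defs.
Context (R : realType) (V : normedModType R) (IP : inner_product V).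

Definition weak_cvg (u : nat -> V) (x : V) : Prop :=
  forall h : V, (fun n => IP (u n) h) @ \oo --> IP x h.

Definition weak_acc_point (u : nat -> V) (x : V) : Prop :=
  exists phi : nat -> nat, {homo phi : m n / (m < n)%N >-> (m < n)%N} /\
    weak_cvg (u \o phi) x.

Definition weakly_seq_continuous (F : V -> V) : Prop :=
  forall (u : nat -> V) (x : V), weak_cvg u x -> weak_cvg (F \o u) (F x).

Definition bounded_set_V (B : set V) : Prop :=
  exists M : R, forall x, B x -> `|x| <= M.

Definition weakly_unif_cvg_bounded (Fd : R -> V -> V) (F : V -> V) : Prop :=
  forall (B : set V), bounded_set_V B -> forall (h : V) (eps : R), 0 < eps ->
    exists d0 : R, 0 < d0 /\ forall d : R, 0 < d -> d < d0 ->
      forall x, B x -> `| IP (Fd d x - F x) h | <= eps.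

Definition Q_proper (Q : V -> \bar R) : Prop :=
  (forall x, (0 <= Q x)%E) /\ exists x, (Q x < +oo)%E.

Definition Q_coercive (Q : V -> \bar R) : Prop :=
  forall M : R, exists r : R, forall x, r < `|x| -> (M%:E <= Q x)%E.

Definition weakly_lsc (Q : V -> \bar R) : Prop :=
  forall (u : nat -> V) (x : V), weak_cvg u x -> (Q x <= limn_einf (Q \o u))%E.

Definition regul (Phi : V -> V) (lambda : R) (Q : V -> \bar R) (x : V) : \bar R :=
  ((2^-1 * `|Phi x - x| ^+ 2)%:E + lambda%:E * Q x)%E.

End Defs.

Definition bounded_linear (R : realType) (X Y : normedModType R) (A : X -> Y) : Prop :=
  linear A /\ exists C : R, forall x, `|A x| <= C * `|x|.

Definition min_solution (R : realType) (X Y : normedModType R)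
  (A : X -> Y) (y : Y) (Reg : X -> \bar R) (x : X) : Prop :=
  A x = y /\ forall z, A z = y -> (Reg x <= Reg z)%E.

From HB Require Import structures.
From mathcomp Require Import all_boot all_order all_algebra.
From mathcomp Require Import all_classical all_reals all_analysis.
From mathcomp Require Import ring lra.
Import Order.TTheory GRing.Theory Num.Theory.
Import numFieldNormedType.Exports.
Local Open Scope classical_set_scope.
Local Open Scope ring_scope.

(* The direct method in the weak topology.  Bounded sequences of a Hilbert space
   have weakly convergent subsequences (diagonal extraction, then Riesz
   representation of the limit functional).  The regularized solutions [xs n] are
   bounded: [R_n (xs n) <= R_n x+], which tends to [R x+] by (A3), and [Q] is
   coercive.  If a subsequence converges weakly to [x], then [A x = y] since [A]
   is weakly continuous, and [Phi_n (xs n) - xs n] converges weakly to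
   [Phi x - x] by (A1) and (A2); weak lower semicontinuity of the norm and of [Q]
   gives [R x <= liminf R_n (xs n) <= limsup R_n (xs n) <= R x+], so [x] is an
   R-minimizing solution and the values converge.  The same semicontinuity
   argument applied to a minimizing sequence yields the R-minimizing solution
   [x+].  Under uniqueness, every subsequence has a further subsequence with the
   same limit, which gives convergence of the whole sequence. *)
Section InnerProduct.
Context {R : realType} {V : normedModType R} (IP : inner_product V).

Lemma ip0l z : IP 0 z = 0.
Proof. by have := ip_linear_l IP 1 0 0 z; rewrite scale1r addr0 mul1r; lra. Qed.

Lemma ipDl x y z : IP (x + y) z = IP x z + IP y z.
Proof. by have := ip_linear_l IP 1 x y z; rewrite scale1r mul1r. Qed.

Lemma ipZl a x z : IP (a *: x) z = a * IP x z.
Proof. by have := ip_linear_l IP a x 0 z; rewrite addr0 ip0l addr0. Qed.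

Lemma ipNl x z : IP (- x) z = - IP x z.
Proof. by rewrite -scaleN1r ipZl mulN1r. Qed.

Lemma ipBl x y z : IP (x - y) z = IP x z - IP y z.
Proof. by rewrite ipDl ipNl. Qed.

Lemma ip0r z : IP z 0 = 0.
Proof. by rewrite ip_sym ip0l. Qed.

Lemma ipDr x y z : IP z (x + y) = IP z x + IP z y.
Proof. by rewrite !(ip_sym IP z) ipDl. Qed.

Lemma ipZr a x z : IP z (a *: x) = a * IP z x.
Proof. by rewrite !(ip_sym IP z) ipZl. Qed.

Lemma ipBr x y z : IP z (x - y) = IP z x - IP z y.
Proof. by rewrite !(ip_sym IP z) ipBl. Qed.

Lemma sqr_normB x y : `|x - y| ^+ 2 = `|x| ^+ 2 - 2 * IP x y + `|y| ^+ 2.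
Proof. by rewrite -!(ip_norm IP) ipBl !ipBr (ip_sym IP y x); ring. Qed.

Lemma CauchySchwarz x y : `|IP x y| <= `|x| * `|y|.
Proof.
have [->|y0] := eqVneq y 0; first by rewrite ip0r !normr0 mulr0.
set a := IP x y; set b := `|y| ^+ 2.
have b_gt0 : 0 < b by rewrite exprn_gt0 // normr_gt0.
(* [0 <= |b x - a y|^2 = b (b |x|^2 - a^2)] *)
have := exprn_ge0 2 (normr_ge0 (b *: x - a *: y)).
rewrite -(ip_norm IP) !(ipBl, ipBr, ipZl, ipZr) !(ip_norm IP) (ip_sym IP y x) -/a -/b.
move=> H; have : a ^+ 2 <= (`|x| * `|y|) ^+ 2.
  rewrite exprMn -/b; have : 0 <= b * (b * `|x| ^+ 2 - a ^+ 2) by nra.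
  by rewrite pmulr_rge0 // subr_ge0 mulrC.
by rewrite -real_normK ?num_real // ler_pXn2r // ?nnegrE // mulr_ge0.
Qed.

Lemma ipl_inj a b : (forall h, IP a h = IP b h) -> a = b.
Proof.
move=> eq_ab; apply/eqP; rewrite -subr_eq0 -normr_eq0 -sqrf_eq0 -(ip_norm IP).
by rewrite ipBl eq_ab subrr.
Qed.

Lemma weak_cvgB {u v x z} : weak_cvg IP u x -> weak_cvg IP v z ->
  weak_cvg IP (fun n => u n - v n) (x - z).
Proof.
move=> ux vz h; rewrite ipBl.
under eq_fun do rewrite ipBl.
exact: cvgB.
Qed.

Lemma cvg_weak_cvg {u x} : u @ \oo --> x -> weak_cvg IP u x.
Proof.
move=> ux h; apply/cvgrPdist_lt => e e_gt0.
have h1_gt0 : 0 < `|h| + 1 by rewrite ltr_wpDl.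
near=> n; rewrite -ipBl; apply: le_lt_trans (CauchySchwarz _ _) _.
have : `|x - u n| < e / (`|h| + 1) by near: n; exact: cvgr_dist_lt _ _ ux _ (divr_gt0 e_gt0 h1_gt0).
rewrite ltr_pdivlMr // => lt; apply: le_lt_trans lt.
by rewrite ler_wpM2l // lerDl.
Unshelve. all: by end_near. Qed.

Lemma weak_cvg_unique {u x z} : weak_cvg IP u x -> weak_cvg IP u z -> x = z.
Proof. by move=> ux uz; apply: ipl_inj => h; exact: cvg_unique (ux h) (uz h). Qed.

(* [|v n|^2 >= 2 <v n, w> - |w|^2], and the right-hand side tends to [|w|^2] *)
Lemma weak_cvg_sqr_norm_gt {v w t} : weak_cvg IP v w -> t < `|w| ^+ 2 ->
  \forall n \near \oo, t < `|v n| ^+ 2.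
Proof.
move=> vw tw.
have lim : (fun n => 2 * IP (v n) w - `|w| ^+ 2) @ \oo --> `|w| ^+ 2.
  rewrite [X in _ --> X](_ : _ = 2 * IP w w - `|w| ^+ 2); last by rewrite (ip_norm IP); ring.
  exact: cvgB (cvgM (cvg_cst _) (vw w)) (cvg_cst _).
near=> n; have := exprn_ge0 2 (normr_ge0 (v n - w)); rewrite sqr_normB.
suff : t < 2 * IP (v n) w - `|w| ^+ 2 by lra.
by near: n; exact: cvgr_gt _ lim _ tw.
Unshelve. all: by end_near. Qed.

End InnerProduct.

Lemma cvg_sqr_norm {R : realType} {V : normedModType R} (u : nat -> V) x :
  u @ \oo --> x -> (fun n => `|u n| ^+ 2) @ \oo --> `|x| ^+ 2.
Proof.
move=> ux; under eq_fun do rewrite expr2; rewrite expr2.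
by apply: cvgM; exact: cvg_norm.
Qed.

Lemma cvgn_sqr_dist_le {R : realType} {V : completeNormedModType R}
    (u : nat -> V) (B : nat -> R) :
  B @ \oo --> 0 -> (forall m n, `|u m - u n| ^+ 2 <= B m + B n) -> cvgn u.
Proof.
move=> B0 uB; apply/cauchy_cvgP/cauchy_ballP => e e_gt0.
have e2_gt0 : 0 < e ^+ 2 / 2 by rewrite divr_gt0 // exprn_gt0.
rewrite near_map2; near=> m n; rewrite -ball_normE /=.
have : `|u m - u n| ^+ 2 < e ^+ 2.
  apply: le_lt_trans (uB _ _) _; rewrite [X in _ < X]splitr ltrD //.
    by near: m; exact: cvgr_lt 0 B0 _ e2_gt0.
  by near: n; exact: cvgr_lt 0 B0 _ e2_gt0.
by rewrite ltr_pXn2r ?nnegrE // ltW.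
Unshelve. all: by end_near. Qed.

Definition lin_subspace {R : realType} {V : normedModType R} (M : set V) :=
  M 0 /\ forall a x y, M x -> M y -> M (a *: x + y).

Definition seq_closed {R : realType} {V : normedModType R} (M : set V) :=
  forall (u : nat -> V) l, (forall n, M (u n)) -> u @ \oo --> l -> M l.

Section Projection.
Context {R : realType} {V : normedModType R} (IP : inner_product V).

(* first-order condition: [t |-> |h - p - t m|^2] is minimal at [t = 0] *)
Lemma nearest_point_orth (M : set V) h p : lin_subspace M -> M p ->
  (forall m, M m -> `|h - p| ^+ 2 <= `|h - m| ^+ 2) ->
  forall m, M m -> IP (h - p) m = 0.
Proof.
move=> [_ MD] Mp p_min m Mm.
set g := IP (h - p) m; set b := `|m| ^+ 2.
have quad t : 0 <= - 2 * t * g + t ^+ 2 * b.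
  have := p_min _ (MD t m p Mm Mp).
  rewrite (_ : h - (t *: m + p) = (h - p) - t *: m); last by rewrite opprD addrA addrAC.
  rewrite (sqr_normB IP (h - p)) normrZ exprMn real_normK ?num_real // ipZr -/g -/b.
  lra.
have b_ge0 : 0 <= b by rewrite exprn_ge0.
set s := (b + 1)^-1.
have s_gt0 : 0 < s by rewrite invr_gt0; lra.
have sb_lt1 : s * b < 1.
  have : s * (b + 1) = 1 by rewrite mulVf //; lra.
  lra.
have : g ^+ 2 * s <= 0 by have := quad (g * s); nra.
by move=> g2s; apply/eqP; rewrite -sqrf_eq0 eq_le sqr_ge0 andbT; nra.
Qed.

End Projection.

Section Hilbert.
Context {R : realType} {V : completeNormedModType R} (IP : inner_product V).

Lemma exists_nearest_point {M : set V} h : lin_subspace M -> seq_closed M ->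
  exists2 p, M p & forall m, M m -> `|h - p| ^+ 2 <= `|h - m| ^+ 2.
Proof.
move=> [M0 MD] Mcl.
pose S := [set `|h - m| ^+ 2 | m in M].
have infS : has_inf S.
  by split; [exists (`|h - 0| ^+ 2), 0 | exists 0 => _ [m _ <-]; exact: exprn_ge0].
set d := inf S.
have d_le m : M m -> d <= `|h - m| ^+ 2.
  by move=> Mm; apply: ge_inf; [case: infS | exists m].
have /choice [mm mmP] : forall n : nat,
    exists m, M m /\ `|h - m| ^+ 2 < d + harmonic n.
  move=> n; have [_ [m Mm <-]] := inf_adherent (harmonic_gt0 n) infS.
  by exists m.
have M_mid x z : M x -> M z -> M (2^-1 *: x + 2^-1 *: z).
  by move=> Mx Mz; apply: (MD) => //; rewrite -[_ *: z]addr0; exact: MD.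
(* parallelogram law, using that the midpoint of [mm i] and [mm j] lies in [M] *)
have mm_cauchy i j : `|mm i - mm j| ^+ 2 <= 2 * harmonic i + 2 * harmonic j.
  have [Mi lti] := mmP i; have [Mj ltj] := mmP j.
  have := d_le _ (M_mid _ _ Mi Mj).
  rewrite !(sqr_normB IP) in lti ltj *.
  rewrite -!(ip_norm IP) !(ipDl, ipDr, ipZl, ipZr) in lti ltj *.
  by have := ip_sym IP (mm j) (mm i); lra.
have /cvg_ex [p mm_p] : cvgn mm.
  apply: (@cvgn_sqr_dist_le _ _ _ (fun n => 2 * harmonic n) _ mm_cauchy).
  by rewrite -[0](mulr0 2); exact: cvgM (cvg_cst _) cvg_harmonic.
have Mp : M p by apply: Mcl mm_p => n; case: (mmP n).
exists p => // m Mm; apply: le_trans (d_le _ Mm).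
rewrite -[X in _ <= X]addr0.
apply: (ler_cvg_to (a := \oo) (f := fun n => `|h - mm n| ^+ 2) (g := fun n => d + harmonic n)).
- by apply: (@cvg_sqr_norm _ _ (fun n => h - mm n)); exact: cvgB (cvg_cst _) mm_p.
- exact: cvgD (cvg_cst _) cvg_harmonic.
- by near=> n; exact: ltW (mmP n).2.
Unshelve. all: by end_near. Qed.

Lemma orth_projection {M : set V} h : lin_subspace M -> seq_closed M ->
  exists2 p, M p & forall m, M m -> IP (h - p) m = 0.
Proof.
move=> Msub Mcl; have [p Mp p_min] := exists_nearest_point h Msub Mcl.
by exists p => //; exact: nearest_point_orth.
Qed.

End Hilbert.

Section LinearFunctional.
Context {R : realType} {V : normedModType R} {f : V -> R}.
Hypothesis f_lin : forall a x y, f (a *: x + y) = a * f x + f y.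

Lemma lfun0 : f 0 = 0.
Proof. by have := f_lin 1 0 0; rewrite scale1r addr0 mul1r; lra. Qed.

Lemma lfunZ a x : f (a *: x) = a * f x.
Proof. by have := f_lin a x 0; rewrite addr0 lfun0 addr0. Qed.

Lemma lfunB x y : f (x - y) = f x - f y.
Proof. by rewrite addrC -scaleN1r f_lin; lra. Qed.

Lemma lfun_cvg (u : nat -> V) x : (exists C, forall z, `|f z| <= C * `|z|) ->
  u @ \oo --> x -> (fun n => f (u n)) @ \oo --> f x.
Proof.
move=> [C f_le] ux; apply/cvgrPdist_lt => e e_gt0.
have C1_gt0 : 0 < `|C| + 1 by rewrite ltr_wpDl.
near=> n; rewrite -lfunB; apply: le_lt_trans (f_le _) _.
have : `|x - u n| < e / (`|C| + 1).
  by near: n; exact: cvgr_dist_lt _ _ ux _ (divr_gt0 e_gt0 C1_gt0).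
rewrite ltr_pdivlMr // => lt; apply: le_lt_trans lt.
by rewrite mulrC ler_wpM2l // (le_trans (ler_norm C)) // lerDl.
Unshelve. all: by end_near. Qed.

End LinearFunctional.

Section Riesz.
Context {R : realType} {V : completeNormedModType R} (IP : inner_product V).

Lemma riesz_representation {f : V -> R} :
  (forall a x y, f (a *: x + y) = a * f x + f y) ->
  (exists C, forall x, `|f x| <= C * `|x|) ->
  exists g, forall x, f x = IP x g.
Proof.
move=> f_lin f_bnd.
have [f0|/existsNP [h fh]] := pselect (forall x, f x = 0).
  by exists 0 => x; rewrite ip0r f0.
pose K := [set x | f x = 0].
have Ksub : lin_subspace K.
  by split => [|a x y]; rewrite /K /= ?lfun0 // f_lin => -> ->; rewrite mulr0 addr0.
have Kcl : seq_closed K.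
  move=> u l Ku ul; have := lfun_cvg f_lin _ _ f_bnd ul.
  rewrite (_ : (fun n => f (u n)) = fun=> 0); last by apply/funext => n; exact: Ku.
  by rewrite /K /= => /(cvg_unique _ (cvg_cst 0)) ->.
have [p Kp orth] := orth_projection IP h Ksub Kcl.
set q := h - p.
have fq0 : f q != 0 by rewrite /q lfunB // Kp subr0; exact/eqP.
have qq0 : IP q q != 0.
  by rewrite (ip_norm IP) sqrf_eq0 normr_eq0; apply: contra fq0 => /eqP ->; rewrite lfun0.
exists ((f q / IP q q) *: q) => x; rewrite ipZr.
have Kx : K (x - (f x / f q) *: q) by rewrite /K /= lfunB // lfunZ // divfK // subrr.
have := orth _ Kx; rewrite ip_sym ipBl ipZl => /eqP; rewrite subr_eq0 => /eqP ->.
by field; rewrite qq0 fq0.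
Qed.

End Riesz.

Lemma increasing_leq {phi : nat -> nat} :
  {homo phi : m n / (m < n)%N >-> (m < n)%N} -> forall n, (n <= phi n)%N.
Proof. by move=> phi_incr; elim=> // n IHn; exact: leq_ltn_trans IHn (phi_incr _ _ _). Qed.

Lemma cvg_subseq {T : topologicalType} {u : nat -> T} {phi : nat -> nat} {l : T} :
  {homo phi : m n / (m < n)%N >-> (m < n)%N} -> u @ \oo --> l -> (u \o phi) @ \oo --> l.
Proof.
move=> phi_incr ul; apply: (cvg_comp _ _ _ ul); apply/cvgnyPge => N.
near=> n; have Nn : (N <= n)%N by near: n; exact: nbhs_infty_ge.
exact: leq_trans Nn (increasing_leq phi_incr n).
Unshelve. all: by end_near. Qed.

Lemma cvg_subsubseq {T : topologicalType} (u : nat -> T) (l : T) :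
  (forall phi : nat -> nat, {homo phi : m n / (m < n)%N >-> (m < n)%N} ->
    exists2 psi : nat -> nat, {homo psi : m n / (m < n)%N >-> (m < n)%N} &
      (u \o phi \o psi) @ \oo --> l) ->
  u @ \oo --> l.
Proof.
move=> sub; apply: contrapT => /existsNP [U /not_implyP [Ul notU]].
have /choice [f fP] : forall N, exists n, (N <= n)%N /\ ~ U (u n).
  move=> N; apply: contrapT => /forallNP noN; apply: notU; exists N => // n Nn.
  by apply: contrapT => nUn; apply: (noN n); split.
(* a subsequence avoiding [U] *)
pose phi := fix phi k := if k is k'.+1 then f (phi k').+1 else f 0%N.
have phi_incr : {homo phi : m n / (m < n)%N >-> (m < n)%N}.
  by apply: (homo_ltn ltn_trans) => k; exact: (fP _).1.
have [psi _ /(_ U Ul) [N _ /(_ N (leqnn N)) /=]] := sub phi phi_incr.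
by case: (psi N) => [|k]; [exact: (fP 0%N).2 | exact: (fP (phi k).+1).2].
Qed.

Lemma diagonal_subseq {R : realType} (a : nat -> nat -> R) :
  (forall j, exists B, forall n, `|a j n| <= B) ->
  exists2 phi : nat -> nat, {homo phi : m n / (m < n)%N >-> (m < n)%N} &
    forall j, cvgn (fun k => a j (phi k)).
Proof.
move=> a_bnd.
have /choice [G GP] : forall p : nat * (nat -> nat), exists g : nat -> nat,
    {homo g : m n / (m < n)%N >-> (m < n)%N} /\ cvgn (a p.1 \o p.2 \o g).
  move=> [j f]; have [B aB] := a_bnd j.
  have [|g g_incr g_cvg] := @bolzano_weierstrass R (a j \o f).
    by exists B; split=> [|M BM x _]; [exact: num_real | exact: le_trans (aB _) (ltW BM)].
  by exists g; split=> // m n mn; change (g m < g n)%O; rewrite (leW_mono g_incr).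
(* [Phi j.+1] is a subsequence of [Phi j] along which [a j] converges *)
pose Phi := fix Phi j := if j is j'.+1 then Phi j' \o G (j', Phi j') else id.
have Phi_incr j : {homo Phi j : m n / (m < n)%N >-> (m < n)%N}.
  by elim: j => //= j IHj m n mn; apply: IHj; exact: (GP (j, Phi j)).1.
have Phi_sub j k : (j <= k)%N -> forall n, exists i, Phi k n = Phi j i.
  elim: k => [|k IHk]; first by rewrite leqn0 => /eqP -> n; exists n.
  rewrite leq_eqVlt => /predU1P [-> n|/IHk jk n]; first by exists n.
  by have [i eq_i] := jk (G (k, Phi k) n); exists i; rewrite -eq_i.
pose d k := Phi k.+1 k.
have d_incr : {homo d : m n / (m < n)%N >-> (m < n)%N}.
  apply: (homo_ltn ltn_trans) => k; apply: Phi_incr.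
  exact: increasing_leq (GP (k.+1, Phi k.+1)).1 k.+1.
exists d => // j; have /cvg_ex [L aL] := (GP (j, Phi j)).2.
apply/cvg_ex; exists L; apply/cvgrPdist_lt => e e_gt0.
have [N _ LN] := iffLR (cvgrPdist_lt _ _) aL e e_gt0.
exists (maxn j (Phi j.+1 N)) => // k /=; rewrite geq_max => /andP [jk Nk].
have [i di] := Phi_sub j.+1 k.+1 jk k.
have Ni : (N <= i)%N.
  rewrite leqNgt; apply/negP => /(Phi_incr j.+1); rewrite -di; apply/negP; rewrite -leqNgt.
  exact: leq_trans Nk (increasing_leq d_incr k).
by have := LN i Ni; rewrite /= /d di.
Qed.

Section WeakCompactness.
Context {R : realType} {V : completeNormedModType R} (IP : inner_product V).

Lemma weak_cvg_dirs_subspace (u : nat -> V) :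
  lin_subspace [set h | cvgn (fun n => IP (u n) h)].
Proof.
split=> [|a x y ux uy] /=; first by under eq_fun do rewrite ip0r; exact: is_cvg_cst.
under eq_fun do rewrite ipDr ipZr.
by apply: is_cvgD => //; apply: is_cvgM => //; exact: is_cvg_cst.
Qed.

(* the maps [h |-> <u n, h>] are uniformly [B]-Lipschitz *)
Lemma weak_cvg_dirs_closed {u : nat -> V} {B : R} : (forall n, `|u n| <= B) ->
  seq_closed [set h | cvgn (fun n => IP (u n) h)].
Proof.
move=> uB w l /= w_cvg wl.
have B1_gt0 : 0 < B + 1 by rewrite ltr_wpDl // (le_trans _ (uB 0%N)).
have ip_near n h : `|IP (u n) l - IP (u n) h| <= (B + 1) * `|l - h|.
  rewrite -ipBr; apply: le_trans (CauchySchwarz IP _ _) _.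
  by apply: ler_wpM2r; rewrite // (le_trans (uB n)) // lerDl.
apply/cauchy_cvgP/cauchy_ballP => e e_gt0.
have e4_gt0 : 0 < e / 4 by rewrite divr_gt0.
have [N _ wN] := iffLR (cvgrPdist_lt _ _) wl _ (divr_gt0 e4_gt0 B1_gt0).
have /= wNl := wN N (leqnn N).
have /cvg_ex [L wL] := w_cvg N.
rewrite near_map2; near=> k m; rewrite -ball_normE /=.
have Lk : `|L - IP (u k) (w N)| < e / 4 by near: k; exact: cvgr_dist_lt _ _ wL _ e4_gt0.
have Lm : `|L - IP (u m) (w N)| < e / 4 by near: m; exact: cvgr_dist_lt _ _ wL _ e4_gt0.
have lk := ip_near k (w N); have lm := ip_near m (w N).
rewrite ltr_pdivlMr // mulrC in wNl.
apply: le_lt_trans (ler_distD (IP (u k) (w N)) _ _) _.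
apply: le_lt_trans (lerD (lexx _) (ler_distD L _ _)) _.
apply: le_lt_trans (lerD (lexx _) (lerD (lexx _) (ler_distD (IP (u m) (w N)) _ _))) _.
rewrite distrC in Lk; rewrite distrC in lm.
lra.
Unshelve. all: by end_near. Qed.

Lemma bounded_weak_subseq (u : nat -> V) B : (forall n, `|u n| <= B) ->
  exists2 phi : nat -> nat, {homo phi : m n / (m < n)%N >-> (m < n)%N} &
    exists x, weak_cvg IP (u \o phi) x.
Proof.
move=> uB; have ip_le n h : `|IP (u n) h| <= B * `|h|.
  by apply: le_trans (CauchySchwarz IP _ _) _; rewrite ler_wpM2r.
have [|phi phi_incr phi_cvg] := @diagonal_subseq R (fun j n => IP (u n) (u j)).
  by move=> j; exists (B * `|u j|) => n; exact: ip_le.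
(* weak convergence holds on the closed span of the [u j], and trivially on its orthogonal *)
have /choice [F uF] : forall h, exists l : R, (fun k => IP (u (phi k)) h) @ \oo --> l.
  move=> h; apply/cvg_ex.
  have [p Mp orth] := orth_projection IP h (weak_cvg_dirs_subspace (u \o phi))
    (weak_cvg_dirs_closed (fun n => uB (phi n))).
  suff -> : (fun k => IP (u (phi k)) h) = (fun k => IP (u (phi k)) p) by [].
  apply/funext => k; have /eqP := orth _ (phi_cvg (phi k)).
  by rewrite ipBl subr_eq0 !(ip_sym IP _ (u (phi k))) => /eqP.
have F_lin a x y : F (a *: x + y) = a * F x + F y.
  have uFa := uF (a *: x + y).
  rewrite (_ : (fun k => _) = fun k => a * IP (u (phi k)) x + IP (u (phi k)) y) in uFa; last first.
    by apply/funext => k; rewrite ipDr ipZr.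
  exact: cvg_unique _ uFa (cvgD (cvgM (cvg_cst _) (uF x)) (uF y)).
have F_le x : `|F x| <= B * `|x|.
  apply: ler_cvg_to (cvg_norm (uF x)) (cvg_cst _) _.
  by near=> k; exact: ip_le.
have [g Fg] := riesz_representation IP F_lin (ex_intro _ B F_le).
by exists phi => //; exists g => h; rewrite ip_sym -Fg; exact: uF.
Unshelve. all: by end_near. Qed.

End WeakCompactness.

Lemma cvg_at_right_seq {R : realType} {T : topologicalType} {f : R -> T} {l : T}
    {d : nat -> R} :
  f x @[x --> 0^'+] --> l -> (forall n, 0 < d n) -> d @ \oo --> 0 ->
  (fun n => f (d n)) @ \oo --> l.
Proof.
move=> fl d_gt0 d0; apply: (cvg_comp _ _ _ fl) => P /d0.
exact: filterS (fun n (dP : 0 < d n -> P (d n)) => dP (d_gt0 n)).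
Qed.

Section WeakCvgMaps.
Context {R : realType} {V : normedModType R} (IP : inner_product V).

Lemma weakly_unif_cvg_seq {Fd : R -> V -> V} {F : V -> V} {d : nat -> R}
    {u : nat -> V} {x} :
  weakly_unif_cvg_bounded IP Fd F -> weakly_seq_continuous IP F ->
  (forall n, 0 < d n) -> d @ \oo --> 0 -> (exists rho, forall n, `|u n| <= rho) ->
  weak_cvg IP u x -> weak_cvg IP (fun n => Fd (d n) (u n)) (F x).
Proof.
move=> Fd_unif F_cont d_gt0 d0 [rho u_le] ux h; apply/cvgrPdist_lt => e e_gt0.
have e2_gt0 : 0 < e / 2 by rewrite divr_gt0.
have ball_rho : bounded_set_V [set z : V | `|z| <= rho] by exists rho.
have [c [c_gt0 Fd_near]] := Fd_unif _ ball_rho h _ e2_gt0.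
near=> n.
have dn : d n < c by near: n; exact: cvgr_lt 0 d0 _ c_gt0.
have Fn : `|IP (F x) h - IP (F (u n)) h| < e / 2.
  by near: n; exact: cvgr_dist_lt _ _ (F_cont _ _ ux h) _ e2_gt0.
have := Fd_near _ (d_gt0 n) dn _ (u_le n); rewrite ipBl distrC => Fdn.
by apply: le_lt_trans (ler_distD (IP (F (u n)) h) _ _) _; lra.
Unshelve. all: by end_near. Qed.

End WeakCvgMaps.

Lemma bounded_linear_weak_cvg {R : realType} {X : completeNormedModType R}
    {Y : normedModType R} (IPX : inner_product X) (IPY : inner_product Y)
    {A : X -> Y} {u x} :
  bounded_linear A -> weak_cvg IPX u x -> weak_cvg IPY (A \o u) (A x).
Proof.
move=> [A_lin [C A_le]] ux h.
have [g Ag] : exists g, forall z, IPY (A z) h = IPX z g.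
  apply: riesz_representation => [a z1 z2|]; first by rewrite A_lin ipDl ipZl.
  exists (C * `|h|) => z; apply: le_trans (CauchySchwarz IPY _ _) _.
  by rewrite mulrAC ler_wpM2r.
by rewrite /= Ag; under eq_fun do rewrite Ag; exact: ux.
Qed.

Lemma lt_limn_einf {R : realType} (u : nat -> \bar R) (t : R) :
  (t%:E < limn_einf u)%E -> \forall n \near \oo, (t%:E < u n)%E.
Proof.
rewrite limn_einf_lim (cvg_lim (@ereal_hausdorff R) (@cvg_einfs_sup R u)).
move=> /ereal_sup_gt [_ [N _ <-]] tN.
exists N => // n /= Nn; apply: lt_le_trans tN _.
by apply: ereal_inf_lbound; exists n.
Qed.

Section Regularizer.
Context {R : realType} {V : normedModType R} (IP : inner_product V).
Context {lambda : R} {Q : V -> \bar R}.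
Hypothesis lambda_gt0 : 0 < lambda.
Hypothesis Q_ge0 : forall x, (0 <= Q x)%E.

Definition regul_res (v x : V) : \bar R := ((2^-1 * `|v| ^+ 2)%:E + lambda%:E * Q x)%E.

Lemma regul_resE Phi x : regul Phi lambda Q x = regul_res (Phi x - x) x.
Proof. by []. Qed.

Lemma regul_res_fin {v x q} : Q x = q%:E ->
  regul_res v x = (2^-1 * `|v| ^+ 2 + lambda * q)%:E.
Proof. by move=> Qx; rewrite /regul_res Qx EFinD EFinM. Qed.

Lemma regul_res_ge0 v x : (0 <= regul_res v x)%E.
Proof.
apply: adde_ge0; first by rewrite lee_fin mulr_ge0 // exprn_ge0.
by rewrite mule_ge0 // lee_fin ltW.
Qed.

Lemma regul_res_le v x (c : R) : (regul_res v x <= c%:E)%E ->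
  exists q, Q x = q%:E /\ 2^-1 * `|v| ^+ 2 + lambda * q <= c.
Proof.
rewrite /regul_res; case Qx: (Q x) => [q| |] //.
- by rewrite -EFinM -EFinD lee_fin => le_c; exists q.
- by rewrite muleC gt0_mulye ?lte_fin // addey.
- by have := Q_ge0 x; rewrite Qx.
Qed.

Lemma regul_res_bounded : Q_coercive Q -> forall c : R,
  exists rho, forall v x, (regul_res v x <= c%:E)%E -> `|x| <= rho.
Proof.
move=> Q_coer c; have [rho Q_big] := Q_coer (c / lambda + 1).
exists rho => v x /regul_res_le [q [Qx le_c]]; rewrite leNgt; apply/negP => /Q_big.
rewrite Qx lee_fin -(ler_pM2l lambda_gt0) => q_big.
have : lambda * (c / lambda + 1) = c + lambda by field; rewrite gt_eqF.
by have := lambda_gt0; have := exprn_ge0 2 (normr_ge0 v); lra.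
Qed.

Section WeakLimit.
Context {Phi : V -> V} {u v : nat -> V} {w : V}.
Hypothesis Q_lsc : weakly_lsc IP Q.
Hypothesis uw : weak_cvg IP u w.
Hypothesis vw : weak_cvg IP v (Phi w - w).

Lemma regul_lsc (t : R) : (t%:E < regul Phi lambda Q w)%E ->
  \forall k \near \oo, (t%:E < regul_res (v k) (u k))%E.
Proof.
move=> t_lt; set a := 2^-1 * `|Phi w - w| ^+ 2.
have [s1 [s2 [s1_lt [s2_lt ->]]]] : exists s1 s2,
    [/\ s1 < a, (s2%:E < Q w)%E & t = s1 + lambda * s2].
  move: t_lt; rewrite /regul; case Qw: (Q w) => [q| |] t_lt.
  - rewrite -EFinM -EFinD lte_fin -/a in t_lt.
    set g := a + lambda * q - t.
    exists (a - g / 2), (q - g / (2 * lambda)); split; rewrite ?lte_fin.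
    + by rewrite gtrBl divr_gt0 // subr_gt0.
    + by rewrite gtrBl divr_gt0 ?mulr_gt0 // subr_gt0.
    + by rewrite /g; field; rewrite gt_eqF.
  - exists (a - 1), ((t - (a - 1)) / lambda); split; rewrite ?ltry //.
      by rewrite gtrBl.
    by field; rewrite gt_eqF.
  - by have := Q_ge0 w; rewrite Qw.
rewrite EFinD EFinM; near=> k; apply: lteD.
- rewrite lte_fin; suff : 2 * s1 < `|v k| ^+ 2 by lra.
  by near: k; apply: weak_cvg_sqr_norm_gt vw _; rewrite /a in s1_lt; lra.
- rewrite lte_pmul2l //; near: k; apply: lt_limn_einf.
  exact: lt_le_trans s2_lt (Q_lsc _ _ uw).
Unshelve. all: by end_near. Qed.

Context {c : nat -> R} {C : R}.
Hypothesis regul_le_c : forall k, (regul_res (v k) (u k) <= (c k)%:E)%E.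
Hypothesis c_cvg : c @ \oo --> C.

Lemma regul_le_lim : (regul Phi lambda Q w <= C%:E)%E.
Proof.
rewrite leNgt; apply/negP => C_lt.
have [t [Ct t_lt]] : exists t, C < t /\ (t%:E < regul Phi lambda Q w)%E.
  move: C_lt; case: (regul Phi lambda Q w) => [r| |] // => [Cr|_].
    by rewrite lte_fin in Cr; exists ((C + r) / 2); rewrite lte_fin; split; lra.
  by exists (C + 1); split; [lra | exact: ltry].
suff : \forall k \near \oo, False by move=> /filter_ex [].
near=> k; have : c k < t by near: k; exact: cvgr_lt C c_cvg _ Ct.
rewrite -lte_fin; apply/negP; rewrite -leNgt; apply: le_trans (regul_le_c k).
by apply: ltW; near: k; exact: regul_lsc.
Unshelve. all: by end_near. Qed.

Lemma regul_cvg : regul Phi lambda Q w = C%:E ->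
  (fun k => regul_res (v k) (u k)) @ \oo --> C%:E.
Proof.
move=> wC; have fin k : regul_res (v k) (u k) \is a fin_num.
  by rewrite ge0_fin_numE ?regul_res_ge0 // (le_lt_trans (regul_le_c k)) ?ltry.
apply/fine_cvgP; split; first exact: nearW.
apply/cvgrPdist_lt => e e_gt0; have Ce : C < C + e by rewrite ltrDl.
near=> k; rewrite ltr_distlC; apply/andP; split.
- rewrite -lte_fin fineK //; near: k; apply: regul_lsc.
  by rewrite wC lte_fin gtrBl.
- rewrite -lte_fin fineK //; apply: le_lt_trans (regul_le_c k) _.
  by rewrite lte_fin; near: k; exact: cvgr_lt C c_cvg _ Ce.
Unshelve. all: by end_near. Qed.

End WeakLimit.
End Regularizer.

Section Regularization.
Context {R : realType} {X Y : completeNormedModType R}.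
Context (IPX : inner_product X) (IPY : inner_product Y).
Context {A : X -> Y} {lambda : R} {Phi : X -> X} {Phid : R -> X -> X}.
Context {Q : X -> \bar R} {y : Y}.
Hypothesis A_bnd : bounded_linear A.
Hypothesis lambda_gt0 : 0 < lambda.
Hypothesis Phi_cont : weakly_seq_continuous IPX Phi.
Hypothesis Phid_unif : weakly_unif_cvg_bounded IPX Phid Phi.
Hypothesis Phid_cvg : forall x, min_solution A y (regul Phi lambda Q) x ->
  (fun d => Phid d x) @ 0^'+ --> Phi x.
Hypothesis Q_ge0 : forall x, (0 <= Q x)%E.
Hypothesis Q_coer : Q_coercive Q.
Hypothesis Q_lsc : weakly_lsc IPX Q.
Hypothesis y_attained : exists x0, A x0 = y /\ (Q x0 < +oo)%E.

Local Notation Rg := (regul Phi lambda Q).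

Lemma exists_min_solution : exists xm, min_solution A y Rg xm.
Proof.
pose m := ereal_inf [set Rg z | z in [set z | A z = y]].
have m_le z : A z = y -> (m <= Rg z)%E by move=> Az; apply: ereal_inf_lbound; exists z.
have m_fin : m \is a fin_num.
  have [x0 [Ax0 Qx0]] := y_attained.
  have m_ge0 : (0 <= m)%E.
    apply: le_ereal_inf_tmp => _ [z _ <-]; rewrite regul_resE.
    by have := regul_res_ge0 lambda_gt0 Q_ge0 (Phi z - z) z.
  rewrite ge0_fin_numE //.
  have Qx0_fin : Q x0 = (fine (Q x0))%:E by rewrite fineK // ge0_fin_numE.
  by apply: le_lt_trans (m_le _ Ax0) _; rewrite regul_resE (regul_res_fin Qx0_fin) ltry.
have /choice [z zP] : forall n, exists z, A z = y /\ (Rg z < m + (harmonic n)%:E)%E.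
  move=> n; have [_ [z Az <-] lt_m] := lb_ereal_inf_adherent (harmonic_gt0 n) m_fin.
  by exists z.
set r := fine m; have m_r : m = r%:E by rewrite fineK.
have z_le n : (Rg (z n) <= (r + harmonic n)%:E)%E.
  by rewrite EFinD -m_r; apply: ltW; exact: (zP n).2.
have [rho z_rho] := regul_res_bounded lambda_gt0 Q_ge0 Q_coer (r + 1).
have [phi phi_incr [w zw]] : exists2 phi : nat -> nat,
    {homo phi : m n / (m < n)%N >-> (m < n)%N} & exists w, weak_cvg IPX (z \o phi) w.
  apply: (bounded_weak_subseq IPX _ rho) => n; apply: z_rho; apply: le_trans (z_le n) _.
  by rewrite lee_fin lerD2l /harmonic /= invf_le1 ?ler1n ?ltr0Sn.
have Aw : A w = y.
  apply: (weak_cvg_unique IPY (bounded_linear_weak_cvg IPX IPY A_bnd zw)).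
  have -> : A \o (z \o phi) = fun=> y by apply/funext => n /=; rewrite (zP _).1.
  by apply: cvg_weak_cvg; exact: cvg_cst.
have w_le : (Rg w <= r%:E)%E.
  apply: (regul_le_lim IPX lambda_gt0 Q_ge0 Q_lsc zw (weak_cvgB IPX (Phi_cont _ _ zw) zw)
    (c := fun n => r + harmonic (phi n))) => [n|]; first by have := z_le (phi n).
  rewrite -[X in _ --> X]addr0; apply: cvgD (cvg_cst _) _.
  exact: (cvg_subseq phi_incr cvg_harmonic).
by exists w; split => // z' Az'; rewrite (le_trans w_le) // -m_r m_le.
Qed.

Lemma min_solution_regul_approx {xm} {d : nat -> R} :
  min_solution A y Rg xm -> (forall n, 0 < d n) -> d @ \oo --> 0 ->
  exists r, Rg xm = r%:E /\ exists2 c : nat -> R,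
    (forall n, regul (Phid (d n)) lambda Q xm = (c n)%:E) & c @ \oo --> r.
Proof.
move=> xm_min d_gt0 d0; have [x0 [Ax0 Qx0]] := y_attained.
have Qx0_fin : Q x0 = (fine (Q x0))%:E by rewrite fineK // ge0_fin_numE.
have := xm_min.2 _ Ax0; rewrite !regul_resE (regul_res_fin Qx0_fin).
move=> /(regul_res_le lambda_gt0 Q_ge0) [q [Qxm _]].
exists (2^-1 * `|Phi xm - xm| ^+ 2 + lambda * q).
split; first by rewrite (regul_res_fin Qxm).
exists (fun n => 2^-1 * `|Phid (d n) xm - xm| ^+ 2 + lambda * q) => [n|].
  by rewrite regul_resE (regul_res_fin Qxm).
apply: cvgD; last exact: cvg_cst.
apply: cvgM; first exact: cvg_cst.
apply: (@cvg_sqr_norm _ _ (fun n => Phid (d n) xm - xm)); apply: cvgB; last exact: cvg_cst.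
exact: cvg_at_right_seq (Phid_cvg _ xm_min) d_gt0 d0.
Qed.

Definition regularized_solutions (delta : nat -> R) (ys : nat -> Y) (xs : nat -> X) :=
  [/\ forall n, 0 < delta n, delta @ \oo --> 0, forall n, `|y - ys n| <= delta n,
    forall n, `|A (xs n) - ys n| <= delta n &
    forall n z, `|A z - ys n| <= delta n ->
      (regul (Phid (delta n)) lambda Q (xs n) <= regul (Phid (delta n)) lambda Q z)%E].

Lemma regularized_solutions_subseq {d ys xs} {phi : nat -> nat} :
  regularized_solutions d ys xs -> {homo phi : m n / (m < n)%N >-> (m < n)%N} ->
  regularized_solutions (d \o phi) (ys \o phi) (xs \o phi).
Proof.
case=> d_gt0 d0 ys_le xs_le xs_min phi_incr.
by split=> [n||n|n|n]; [exact: d_gt0 | exact: cvg_subseq | exact: ys_le | exact: xs_le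
  | exact: xs_min].
Qed.

Lemma regularized_solutions_bounded {d ys xs} : regularized_solutions d ys xs ->
  exists rho, forall n, `|xs n| <= rho.
Proof.
case=> d_gt0 d0 ys_le _ xs_min; have [xm xm_min] := exists_min_solution.
have [r [_ [c Rc c_cvg]]] := min_solution_regul_approx xm_min d_gt0 d0.
have c_cvgn : cvgn c by apply/cvg_ex; exists r.
have [M [_ c_le]] := cvg_seq_bounded c_cvgn.
have [rho rho_le] := regul_res_bounded lambda_gt0 Q_ge0 Q_coer (M + 1).
exists rho => n; apply: (rho_le (Phid (d n) (xs n) - xs n)).
have := xs_min n xm; rewrite xm_min.1 Rc regul_resE => /(_ (ys_le n)) /le_trans; apply.
by rewrite lee_fin (le_trans (ler_norm _)) // c_le // ltrDl.
Qed.

Lemma regularized_solutions_weak_limit {d ys xs xp} :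
  regularized_solutions d ys xs -> weak_cvg IPX xs xp ->
  min_solution A y Rg xp /\
  (fun n => regul (Phid (d n)) lambda Q (xs n)) @ \oo --> Rg xp.
Proof.
move=> rs_xs xsw; have xs_bnd := regularized_solutions_bounded rs_xs.
case: rs_xs => d_gt0 d0 ys_le xs_feas xs_min; have [xm xm_min] := exists_min_solution.
have [r [Rxm [c Rc c_cvg]]] := min_solution_regul_approx xm_min d_gt0 d0.
have xs_le_c n : (regul (Phid (d n)) lambda Q (xs n) <= (c n)%:E)%E.
  by have := xs_min n xm; rewrite xm_min.1 Rc; apply; exact: ys_le.
have A_xs : (fun n => A (xs n)) @ \oo --> y.
  apply/cvgrPdist_le => e e_gt0; have e2_gt0 : 0 < e / 2 by rewrite divr_gt0.
  near=> n; apply: le_trans (ler_distD (ys n) _ _) _; rewrite [`|ys n - _|]distrC.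
  have : d n <= e / 2 by near: n; exact: cvgr_le 0 d0 _ e2_gt0.
  by have := ys_le n; have := xs_feas n; lra.
have Axp : A xp = y.
  apply: (weak_cvg_unique IPY (bounded_linear_weak_cvg IPX IPY A_bnd xsw)).
  by apply: cvg_weak_cvg; exact: A_xs.
have vw := weak_cvgB IPX (weakly_unif_cvg_seq IPX Phid_unif Phi_cont d_gt0 d0 xs_bnd xsw) xsw.
have Rxp : Rg xp = r%:E.
  apply/eqP; rewrite eq_le (regul_le_lim IPX lambda_gt0 Q_ge0 Q_lsc xsw vw xs_le_c c_cvg).
  by rewrite -Rxm xm_min.2.
split; first by split => // z Az; rewrite Rxp -Rxm xm_min.2.
by rewrite Rxp; have := regul_cvg IPX lambda_gt0 Q_ge0 Q_lsc xsw vw xs_le_c c_cvg Rxp.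
Unshelve. all: by end_near. Qed.

(* every subsequence has a further subsequence converging to the unique minimizing solution *)
Lemma regularized_solutions_unique_limit {d ys xs xp} :
  regularized_solutions d ys xs -> (forall z, min_solution A y Rg z -> z = xp) ->
  weak_cvg IPX xs xp /\
  (fun n => regul (Phid (d n)) lambda Q (xs n)) @ \oo --> Rg xp.
Proof.
move=> rs_xs xp_uniq.
have sub (phi : nat -> nat) : {homo phi : m n / (m < n)%N >-> (m < n)%N} ->
    exists2 psi : nat -> nat, {homo psi : m n / (m < n)%N >-> (m < n)%N} &
    weak_cvg IPX (xs \o phi \o psi) xp /\
    (fun k => regul (Phid (d (phi (psi k)))) lambda Q (xs (phi (psi k)))) @ \oo --> Rg xp.
  move=> phi_incr; have rs_phi := regularized_solutions_subseq rs_xs phi_incr.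
  have [rho xs_le] := regularized_solutions_bounded rs_phi.
  have [psi psi_incr [z zw]] := bounded_weak_subseq IPX _ rho xs_le.
  have [z_min Rz] := regularized_solutions_weak_limit
    (regularized_solutions_subseq rs_phi psi_incr) zw.
  by exists psi => //; rewrite -(xp_uniq _ z_min).
split.
- move=> h; apply: cvg_subsubseq => phi /sub [psi psi_incr [xw _]].
  by exists psi => //; exact: xw h.
- by apply: cvg_subsubseq => phi /sub [psi psi_incr [_ Rcvg]]; exists psi.
Qed.

End Regularization.

Arguments regularized_solutions {R X Y} A lambda Phid Q y.

Theorem theorem1 (R : realType)
  (X Y : completeNormedModType R) (IPX : inner_product X) (IPY : inner_product Y)
  (A : X -> Y) (hA : bounded_linear A)
  (lambda : R) (hlambda : 0 < lambda)
  (Phi : X -> X) (Phid : R -> X -> X) (Q : X -> \bar R)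
  (y : Y)
  (A1a : weakly_seq_continuous IPX Phi)
  (A1b : forall d : R, 0 < d -> weakly_seq_continuous IPX (Phid d))
  (A2 : weakly_unif_cvg_bounded IPX Phid Phi)
  (A3 : forall x : X, min_solution A y (regul Phi lambda Q) x ->
          (fun d : R => Phid d x) @ 0^'+ --> Phi x)
  (A4 : Q_proper Q /\ Q_coercive Q /\ weakly_lsc IPX Q)
  (hsolv : exists x0 : X, A x0 = y /\ (Q x0 < +oo)%E)
  (delta : nat -> R) (hdelta_pos : forall n, 0 < delta n)
  (hdelta_cvg : delta @ \oo --> 0)
  (ys : nat -> Y) (hys : forall n, `|y - ys n| <= delta n)
  (xs : nat -> X)
  (hxs_feas : forall n, `|A (xs n) - ys n| <= delta n)
  (hxs_min : forall n z, `|A z - ys n| <= delta n ->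
      (regul (Phid (delta n)) lambda Q (xs n) <= regul (Phid (delta n)) lambda Q z)%E) :
  (exists xp : X, weak_acc_point IPX xs xp)
  /\ (forall (phi : nat -> nat) (xp : X),
        {homo phi : m n / (m < n)%N >-> (m < n)%N} ->
        weak_cvg IPX (xs \o phi) xp ->
        min_solution A y (regul Phi lambda Q) xp /\
        (fun k => regul (Phid (delta (phi k))) lambda Q (xs (phi k))) @ \oo
          --> regul Phi lambda Q xp)
  /\ (forall xp : X, min_solution A y (regul Phi lambda Q) xp ->
        (forall z, min_solution A y (regul Phi lambda Q) z -> z = xp) ->
        weak_cvg IPX xs xp /\
        (fun n => regul (Phid (delta n)) lambda Q (xs n)) @ \oo
          --> regul Phi lambda Q xp).
Proof.
have [[Q_ge0 _] [Q_coer Q_lsc]] := A4.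
have rs_xs : regularized_solutions A lambda Phid Q y delta ys xs by split.
have rs_weak_limit := regularized_solutions_weak_limit IPX IPY hA hlambda A1a A2 A3
  Q_ge0 Q_coer Q_lsc hsolv.
split; [|split].
- have [rho xs_le] := regularized_solutions_bounded IPX IPY hA hlambda A1a A3
    Q_ge0 Q_coer Q_lsc hsolv rs_xs.
  have [phi phi_incr [xp xpw]] := bounded_weak_subseq IPX _ rho xs_le.
  by exists xp, phi.
- move=> phi xp phi_incr; apply: rs_weak_limit.
  exact: regularized_solutions_subseq rs_xs phi_incr.
- move=> xp _; exact: (regularized_solutions_unique_limit IPX IPY hA hlambda A1a A2 A3
    Q_ge0 Q_coer Q_lsc hsolv rs_xs).
Qed.
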